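(* Let $\varphi\colon\partial\mathbb{D}\to\partial\mathbb{D}$ be a bi-Lipschitz homeomorphism fixing $1,i,-1,-i$, written $\varphi(e^{i\theta})=e^{i\varphi(\theta)}$, where $\theta\mapsto\varphi(\theta)$ is the increasing continuous lift with $\varphi(0)=0$. For $t\in[0,1]$ let $\varphi_t(\theta)=(1-t)\theta+t\varphi(\theta)$ and define $\overline{\varphi}\colon\overline{\mathbb{D}}\times[0,1]\to\overline{\mathbb{D}}\times[0,1]$ by $\overline{\varphi}(re^{i\theta},t)=(re^{i\varphi_t(\theta)},t)$. Then $\overline{\varphi}$ is bi-Lipschitz.
   Context: $\mathbb{D}=\{z\in\mathbb{C}:|z|<1\}$ is the unit disk. *)

(* concrete reals R. The plane C is modelled as R*R. *)
From Stdlib Require Import Reals.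
Open Scope R_scope.

Definition dist2 (p q : R * R) : R :=
  sqrt ((fst p - fst q) ^ 2 + (snd p - snd q) ^ 2).

Definition dist3 (p q : (R * R) * R) : R :=
  sqrt ((fst (fst p) - fst (fst q)) ^ 2 + (snd (fst p) - snd (fst q)) ^ 2
        + (snd p - snd q) ^ 2).

Definition on_circle (p : R * R) : Prop := fst p ^ 2 + snd p ^ 2 = 1.

Definition expi (th : R) : R * R := (cos th, sin th).

Definition phi_t (lift : R -> R) (t th : R) : R := (1 - t) * th + t * lift th.

Definition polar_pt (r th t : R) : (R * R) * R := ((r * cos th, r * sin th), t).

Definition phibar_pt (lift : R -> R) (r th t : R) : (R * R) * R :=
  polar_pt r (phi_t lift t th) t.

From Stdlib Require Import Reals Lra Lia Psatz ZArith.
Open Scope R_scope.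

(* Since |e^{ia} - e^{ib}|^2 = 2 (1 - cos (a - b)), the squared distance between
   (r1 e^{i th1}, t1) and (r2 e^{i th2}, t2) is
   (r1 - r2)^2 + 2 r1 r2 (1 - cos (th1 - th2)) + (t1 - t2)^2, so it suffices to compare
   1 - cos of the angle differences before and after the map, up to an additive
   (t1 - t2)^2.  Bi-Lipschitz continuity of phi on the circle forces
   lift (th + 2 PI) = lift th + 2 PI; as phi fixes the quarter points, the increasing
   lift moves no angle by more than PI/2, which makes it (and every phi_t) bi-Lipschitz
   on R, while |phi_t1 th - phi_t2 th| <= 2 |t1 - t2|.  After reducing angle
   differences modulo 2 PI into [-PI, PI], where 1 - cos w is comparable to w^2,
   the comparison follows. *)

Lemma Rabs_le_between x a : Rabs x <= a -> - a <= x <= a.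
Proof. unfold Rabs; destruct Rcase_abs; intros; lra. Qed.

Lemma one_sub_cos_eq w : 1 - cos w = 2 * sin (w / 2) ^ 2.
Proof. replace w with (2 * (w / 2)) at 1 by field. rewrite cos_2a_sin. ring. Qed.

Lemma one_sub_cos_ge0 w : 0 <= 1 - cos w.
Proof. destruct (COS_bound w). lra. Qed.

Lemma sin_sqr_le u : sin u ^ 2 <= u ^ 2.
Proof.
  assert (Hpos : forall v, 0 < v -> sin v ^ 2 <= v ^ 2).
  { intros v Hv. pose proof (sin_lt_x v Hv). pose proof (SIN_bound v). pose proof PI2_3_2.
    destruct (Rle_or_lt 1 v).
    - nra.
    - assert (0 <= sin v) by (apply sin_ge_0; lra). nra. }
  destruct (Rtotal_order u 0) as [H | [-> | H]].
  - replace (sin u ^ 2) with (sin (- u) ^ 2) by (rewrite sin_neg; ring).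
    replace (u ^ 2) with ((- u) ^ 2) by ring. apply Hpos; lra.
  - rewrite sin_0. lra.
  - now apply Hpos.
Qed.

Lemma one_sub_cos_le w : 1 - cos w <= w ^ 2 / 2.
Proof. rewrite one_sub_cos_eq. pose proof (sin_sqr_le (w / 2)). lra. Qed.

Lemma sin_ge_third u : 0 <= u <= PI / 2 + 1 / 4 -> u / 3 <= sin u.
Proof.
  intros Hu. pose proof PI_4. pose proof PI2_3_2.
  destruct (Rle_or_lt u 2) as [Hu2 | Hu2].
  - destruct (pre_sin_bound u 0 ltac:(lra) ltac:(lra)) as [Hs _].
    unfold sin_approx, sin_term in Hs; simpl in Hs. nra.
  - (* beyond 2 the cubic Taylor bound is too weak; use sin u = cos (u - PI/2) instead *)
    replace u with (PI / 2 + (u - PI / 2)) by ring.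
    rewrite sin_plus, cos_PI2, sin_PI2.
    pose proof (one_sub_cos_le (u - PI / 2)). nra.
Qed.

Lemma one_sub_cos_ge w : Rabs w <= PI + 1 / 2 -> w ^ 2 / 18 <= 1 - cos w.
Proof.
  intros Hw. rewrite one_sub_cos_eq.
  assert (E : sin (w / 2) ^ 2 = sin (Rabs w / 2) ^ 2).
  { unfold Rabs; destruct (Rcase_abs w); [|reflexivity].
    replace (- w / 2) with (- (w / 2)) by field. rewrite sin_neg. ring. }
  rewrite E, <- (pow2_abs w). pose proof (Rabs_pos w).
  pose proof (sin_ge_third (Rabs w / 2) ltac:(lra)). nra.
Qed.

Lemma cos_eq_1_mult_2PI w : cos w = 1 -> exists k : Z, w = IZR k * (2 * PI).
Proof.
  intros H. assert (Hs : sin (w / 2) = 0).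
  { pose proof (one_sub_cos_eq w). rewrite H in *. nra. }
  destruct (sin_eq_0_0 _ Hs) as [k Hk]. exists k. lra.
Qed.

Lemma cos_eq_1_small w : - (2 * PI) < w < 2 * PI -> cos w = 1 -> w = 0.
Proof.
  intros Hw H. destruct (cos_eq_1_mult_2PI w H) as [k ->]. pose proof PI_RGT_0.
  assert (k = 0%Z) as ->.
  { assert (-1 < IZR k < 1) as [A B] by (split; nra).
    apply lt_IZR in A. apply lt_IZR in B. lia. }
  ring.
Qed.

Lemma cos_add_mult_2PI w (k : Z) : cos (w + IZR k * (2 * PI)) = cos w.
Proof.
  assert (Hs : sin (IZR k * PI) = 0) by (apply sin_eq_0_1; now exists k).
  rewrite cos_plus. replace (IZR k * (2 * PI)) with (2 * (IZR k * PI)) by ring.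
  rewrite cos_2a_sin, sin_2a, Hs. ring.
Qed.

Lemma exists_mult_2PI_in_0_2PI x : exists k : Z, 0 <= x + IZR k * (2 * PI) < 2 * PI.
Proof.
  pose proof PI_RGT_0. destruct (archimed (x / (2 * PI))) as [A B].
  exists (1 - up (x / (2 * PI)))%Z. rewrite minus_IZR.
  assert (E : x = x / (2 * PI) * (2 * PI)) by (field; lra).
  split; nra.
Qed.

Lemma exists_mult_2PI_Rabs_le_PI x : exists k : Z, Rabs (x + IZR k * (2 * PI)) <= PI.
Proof.
  destruct (exists_mult_2PI_in_0_2PI (x + PI)) as [k Hk]. exists k. apply Rabs_le. lra.
Qed.

Lemma one_sub_cos_le_of_Rabs_le x z s c d :
  Rabs x <= PI -> Rabs z <= c * Rabs x + d * Rabs s ->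
  1 - cos z <= 18 * c ^ 2 * (1 - cos x) + d ^ 2 * s ^ 2.
Proof.
  intros Hx Hz. pose proof PI_RGT_0.
  pose proof (one_sub_cos_le z). pose proof (one_sub_cos_ge x ltac:(lra)).
  assert (Hz2 : z ^ 2 <= 2 * c ^ 2 * x ^ 2 + 2 * d ^ 2 * s ^ 2).
  { rewrite <- (pow2_abs z), <- (pow2_abs x), <- (pow2_abs s).
    assert (Rabs z ^ 2 <= (c * Rabs x + d * Rabs s) ^ 2)
      by (apply pow_incr; pose proof (Rabs_pos z); lra).
    pose proof (pow2_ge_0 (c * Rabs x - d * Rabs s)). nra. }
  assert (c ^ 2 * x ^ 2 <= c ^ 2 * (18 * (1 - cos x)))
    by (apply Rmult_le_compat_l; [apply pow2_ge_0 | lra]).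
  lra.
Qed.

Lemma on_circle_expi a : on_circle (expi a).
Proof. unfold on_circle, expi; simpl. pose proof (sin2_cos2 a). unfold Rsqr in *. lra. Qed.

Lemma dist2_expi a b : dist2 (expi a) (expi b) = sqrt (2 * (1 - cos (a - b))).
Proof.
  unfold dist2, expi; simpl. f_equal. rewrite cos_minus.
  pose proof (sin2_cos2 a). pose proof (sin2_cos2 b). unfold Rsqr in *. nra.
Qed.

Lemma dist3_polar r1 a t1 r2 b t2 :
  dist3 (polar_pt r1 a t1) (polar_pt r2 b t2) =
  sqrt ((r1 - r2) ^ 2 + 2 * (r1 * r2) * (1 - cos (a - b)) + (t1 - t2) ^ 2).
Proof.
  unfold dist3, polar_pt; simpl. f_equal. rewrite cos_minus.
  pose proof (sin2_cos2 a) as Ea. pose proof (sin2_cos2 b) as Eb. unfold Rsqr in *.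
  transitivity (r1 * r1 * (sin a * sin a + cos a * cos a) + r2 * r2 * (sin b * sin b + cos b * cos b)
                - 2 * (r1 * r2) * (cos a * cos b + sin a * sin b) + (t1 - t2) * (t1 - t2)); [ring|].
  rewrite Ea, Eb. ring.
Qed.

Lemma le_sqr_of_sqrt_le x y L : 0 <= x -> 0 <= y -> sqrt x <= L * sqrt y -> x <= L ^ 2 * y.
Proof.
  intros Hx Hy H. rewrite <- (pow2_sqrt x Hx), <- (pow2_sqrt y Hy), <- Rpow_mult_distr.
  apply pow_incr. split; [apply sqrt_pos | exact H].
Qed.

Lemma dist3_polar_le r1 r2 a1 a2 b1 b2 t1 t2 C :
  0 <= r1 <= 1 -> 0 <= r2 <= 1 -> 0 <= C ->
  1 - cos (b1 - b2) <= C * (1 - cos (a1 - a2) + (t1 - t2) ^ 2) ->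
  dist3 (polar_pt r1 b1 t1) (polar_pt r2 b2 t2)
    <= sqrt (1 + 2 * C) * dist3 (polar_pt r1 a1 t1) (polar_pt r2 a2 t2).
Proof.
  intros Hr1 Hr2 HC Hb. rewrite !dist3_polar, <- sqrt_mult_alt by lra. apply sqrt_le_1_alt.
  pose proof (one_sub_cos_ge0 (a1 - a2)). pose proof (one_sub_cos_ge0 (b1 - b2)).
  pose proof (pow2_ge_0 (r1 - r2)). pose proof (pow2_ge_0 (t1 - t2)).
  assert (Hp : 0 <= r1 * r2 <= 1) by (split; nra).
  assert (r1 * r2 * (1 - cos (b1 - b2))
          <= r1 * r2 * (C * (1 - cos (a1 - a2) + (t1 - t2) ^ 2)))
    by (apply Rmult_le_compat_l; lra).
  assert (0 <= C * ((1 - r1 * r2) * (t1 - t2) ^ 2)) by (apply Rmult_le_pos; nra).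
  assert (0 <= C * (r1 - r2) ^ 2) by (apply Rmult_le_pos; lra).
  assert (0 <= (1 + 2 * C) * (r1 * r2 * (1 - cos (a1 - a2)))) by (apply Rmult_le_pos; nra).
  nra.
Qed.

(* [1 - cos (a - b)] is half the squared chord between e^{ia} and e^{ib}, so this
   says that e^{ia} |-> e^{i f(a)} is L-bi-Lipschitz on the circle. *)
Definition chord_bilipschitz (L : R) (f : R -> R) : Prop :=
  forall a b, 1 - cos (a - b) <= L ^ 2 * (1 - cos (f a - f b)) /\
              1 - cos (f a - f b) <= L ^ 2 * (1 - cos (a - b)).

Lemma chord_bilipschitz_of_circle (phi : R * R -> R * R) (lift : R -> R) L :
  (forall p q, on_circle p -> on_circle q ->
     dist2 p q <= L * dist2 (phi p) (phi q) /\ dist2 (phi p) (phi q) <= L * dist2 p q) ->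
  (forall th, phi (expi th) = expi (lift th)) ->
  chord_bilipschitz L lift.
Proof.
  intros Hb Hlift a b.
  destruct (Hb (expi a) (expi b) (on_circle_expi a) (on_circle_expi b)) as [B1 B2].
  rewrite !Hlift, !dist2_expi in B1, B2.
  pose proof (one_sub_cos_ge0 (a - b)). pose proof (one_sub_cos_ge0 (lift a - lift b)).
  apply le_sqr_of_sqrt_le in B1; [|lra|lra].
  apply le_sqr_of_sqrt_le in B2; [|lra|lra].
  split; lra.
Qed.

Definition bilipschitz (M : R) (f : R -> R) : Prop :=
  forall a b, Rabs (f a - f b) <= M * Rabs (a - b) /\ Rabs (a - b) <= M * Rabs (f a - f b).

Lemma bilipschitz_nonneg M f : bilipschitz M f -> 0 <= M.
Proof.
  intros H. destruct (H 1 0) as [H1 _]. pose proof (Rabs_pos (f 1 - f 0)).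
  rewrite Rminus_0_r, Rabs_R1 in H1. lra.
Qed.

Lemma bilipschitz_of_increasing (f : R -> R) M :
  (forall a b, b <= a -> 0 <= f a - f b <= M * (a - b) /\ a - b <= M * (f a - f b)) ->
  bilipschitz M f.
Proof.
  intros H a b. destruct (Rle_or_lt b a) as [Hab | Hab].
  - destruct (H a b Hab) as [[H0 H1] H2]. rewrite !Rabs_right by lra. lra.
  - destruct (H b a ltac:(lra)) as [[H0 H1] H2].
    rewrite <- (Rabs_Ropp (f a - f b)), <- (Rabs_Ropp (a - b)), !Rabs_right by lra. lra.
Qed.

Section Lift.

Variables (lift : R -> R) (L : R).
Hypothesis lift_incr : forall x y, x < y -> lift x < lift y.
Hypothesis lift_cont : continuity lift.
Hypothesis lift_chord : chord_bilipschitz L lift.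

Lemma lift_le x y : x <= y -> lift x <= lift y.
Proof. intros [H | <-]; [left; auto | lra]. Qed.

Lemma cos_lift_sub_eq_1 a b : cos (lift a - lift b) = 1 <-> cos (a - b) = 1.
Proof.
  destruct (lift_chord a b).
  pose proof (one_sub_cos_ge0 (a - b)). pose proof (one_sub_cos_ge0 (lift a - lift b)).
  split; intros E; rewrite E in *; nra.
Qed.

Lemma lift_add_2PI th : lift (th + 2 * PI) = lift th + 2 * PI.
Proof.
  pose proof PI_RGT_0.
  set (d := lift (th + 2 * PI) - lift th).
  assert (Hd_pos : 0 < d) by (pose proof (lift_incr th (th + 2 * PI) ltac:(lra)); unfold d; lra).
  assert (Hd : cos d = 1).
  { apply cos_lift_sub_eq_1. replace (th + 2 * PI - th) with (2 * PI) by ring. apply cos_2PI. }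
  (* if d > 2 PI, the value lift th + 2 PI would be taken strictly inside (th, th + 2 PI) *)
  assert (Hd_le : d <= 2 * PI).
  { apply Rnot_lt_le. intros Hlt.
    destruct (IVT (fun s => lift s - (lift th + 2 * PI)) th (th + 2 * PI)) as [z [Hz Hz0]];
      cbn beta in *; unfold d in Hlt; try lra.
    { apply continuity_minus; [exact lift_cont | apply continuity_const; now intros ? ?]. }
    assert (Hcz : cos (z - th) = 1).
    { apply cos_lift_sub_eq_1. replace (lift z - lift th) with (2 * PI) by lra. apply cos_2PI. }
    destruct (Rle_lt_dec (2 * PI) (z - th)).
    - replace z with (th + 2 * PI) in Hz0 by lra. lra.
    - pose proof (cos_eq_1_small (z - th) ltac:(lra) Hcz). replace z with th in Hz0 by lra. lra. }
  assert (Hd' : cos (d - 2 * PI) = 1) by (rewrite cos_minus, cos_2PI, sin_2PI, Hd; ring).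
  pose proof (cos_eq_1_small (d - 2 * PI) ltac:(lra) Hd'). unfold d in *. lra.
Qed.

Lemma lift_add_mult_2PI (k : Z) th : lift (th + IZR k * (2 * PI)) = lift th + IZR k * (2 * PI).
Proof.
  revert th. induction k as [| k IH | k IH] using Z.peano_ind; intros th.
  - rewrite Rmult_0_l, !Rplus_0_r. reflexivity.
  - rewrite succ_IZR.
    replace (th + (IZR k + 1) * (2 * PI)) with (th + IZR k * (2 * PI) + 2 * PI) by ring.
    rewrite lift_add_2PI, IH. ring.
  - rewrite <- Z.sub_1_r, minus_IZR.
    pose proof (lift_add_2PI (th + (IZR k - 1) * (2 * PI))) as E.
    replace (th + (IZR k - 1) * (2 * PI) + 2 * PI) with (th + IZR k * (2 * PI)) in E by ring.
    rewrite IH in E. lra.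
Qed.

Hypothesis lift0 : lift 0 = 0.

Lemma lift_2PI : lift (2 * PI) = 2 * PI.
Proof. rewrite <- (Rplus_0_l (2 * PI)), lift_add_2PI, lift0. ring. Qed.

Lemma lift_fixed_of_expi c : 0 < c < 2 * PI -> expi (lift c) = expi c -> lift c = c.
Proof.
  intros Hc E. unfold expi in E. injection E as Ec Es.
  assert (Hcos : cos (lift c - c) = 1).
  { rewrite cos_minus, Ec, Es. pose proof (sin2_cos2 c). unfold Rsqr in *. lra. }
  pose proof (lift_incr 0 c ltac:(lra)). pose proof (lift_incr c (2 * PI) ltac:(lra)).
  rewrite lift0, lift_2PI in *.
  pose proof (cos_eq_1_small (lift c - c) ltac:(lra) Hcos). lra.
Qed.

Lemma lift_displacement :
  lift (PI / 2) = PI / 2 -> lift PI = PI -> lift (3 * (PI / 2)) = 3 * (PI / 2) ->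
  forall th, Rabs (lift th - th) <= PI / 2.
Proof.
  intros q1 q2 q3 th. pose proof PI_RGT_0. pose proof lift_2PI.
  destruct (exists_mult_2PI_in_0_2PI th) as [k Hk].
  replace (lift th - th) with (lift (th + IZR k * (2 * PI)) - (th + IZR k * (2 * PI)))
    by (rewrite lift_add_mult_2PI; ring).
  set (u := th + IZR k * (2 * PI)) in *. apply Rabs_le.
  (* lift maps each quarter [j PI/2, (j+1) PI/2] of [0, 2 PI] into itself *)
  destruct (Rle_or_lt u (PI / 2)); [|destruct (Rle_or_lt u PI);
    [|destruct (Rle_or_lt u (3 * (PI / 2)))]].
  - pose proof (lift_le 0 u ltac:(lra)). pose proof (lift_le u (PI / 2) ltac:(lra)). lra.
  - pose proof (lift_le (PI / 2) u ltac:(lra)). pose proof (lift_le u PI ltac:(lra)). lra.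
  - pose proof (lift_le PI u ltac:(lra)). pose proof (lift_le u (3 * (PI / 2)) ltac:(lra)). lra.
  - pose proof (lift_le (3 * (PI / 2)) u ltac:(lra)). pose proof (lift_le u (2 * PI) ltac:(lra)). lra.
Qed.

Hypothesis L_pos : 0 < L.
Hypothesis lift_disp : forall th, Rabs (lift th - th) <= PI / 2.

(* On a window of length 1/2 the displacement bound keeps lift a - lift b below
   PI + 1/2, where 1 - cos is comparable to the square. *)
Lemma lift_bilipschitz_local a b : b <= a <= b + 1 / 2 ->
  lift a - lift b <= 3 * L * (a - b) /\ a - b <= 3 * L * (lift a - lift b).
Proof.
  intros Hab. pose proof PI_RGT_0.
  pose proof (lift_le b a ltac:(lra)).
  pose proof (Rabs_le_between _ _ (lift_disp a)). pose proof (Rabs_le_between _ _ (lift_disp b)).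
  destruct (lift_chord a b) as [Q1 Q2].
  pose proof (one_sub_cos_ge (a - b) ltac:(apply Rabs_le; lra)).
  pose proof (one_sub_cos_ge (lift a - lift b) ltac:(apply Rabs_le; lra)).
  pose proof (one_sub_cos_le (a - b)). pose proof (one_sub_cos_le (lift a - lift b)).
  assert (Hy : 0 <= lift a - lift b) by lra. assert (Hx : 0 <= a - b) by lra.
  set (x := a - b) in *. set (y := lift a - lift b) in *.
  assert (HL2 : 0 <= L ^ 2) by apply pow2_ge_0.
  assert (Sy : y ^ 2 <= (3 * L * x) ^ 2).
  { assert (L ^ 2 * (1 - cos x) <= L ^ 2 * (x ^ 2 / 2)) by (apply Rmult_le_compat_l; lra). nra. }
  assert (Sx : x ^ 2 <= (3 * L * y) ^ 2).
  { assert (L ^ 2 * (1 - cos y) <= L ^ 2 * (y ^ 2 / 2)) by (apply Rmult_le_compat_l; lra). nra. }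
  split; apply Rsqr_incr_0_var; unfold Rsqr; nra.
Qed.

Lemma lift_bilipschitz_ordered a b : b <= a ->
  0 <= lift a - lift b <= (48 * L + 9) * (a - b) /\
  a - b <= (48 * L + 9) * (lift a - lift b).
Proof.
  intros Hab. pose proof PI_RGT_0. pose proof PI_4.
  pose proof (lift_le b a Hab).
  pose proof (Rabs_le_between _ _ (lift_disp a)). pose proof (Rabs_le_between _ _ (lift_disp b)).
  destruct (Rle_or_lt (a - b) (1 / 2)) as [Hx | Hx].
  - destruct (lift_bilipschitz_local a b ltac:(lra)). split; [split|]; nra.
  - (* far apart: the displacement bound gives the upper estimate, and the step
       [b, b + 1/2] the lower one *)
    destruct (lift_bilipschitz_local (b + 1 / 2) b ltac:(lra)) as [_ Hstep].
    pose proof (lift_le (b + 1 / 2) a ltac:(lra)).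
    split; [split; nra|]. destruct (Rle_or_lt (a - b) 8); nra.
Qed.

Lemma phi_t_add_mult_2PI t th (k : Z) :
  phi_t lift t (th + IZR k * (2 * PI)) = phi_t lift t th + IZR k * (2 * PI).
Proof. unfold phi_t. rewrite lift_add_mult_2PI. ring. Qed.

Lemma phi_t_sub_time t1 t2 th :
  Rabs (phi_t lift t1 th - phi_t lift t2 th) <= 2 * Rabs (t1 - t2).
Proof.
  unfold phi_t.
  replace ((1 - t1) * th + t1 * lift th - ((1 - t2) * th + t2 * lift th))
    with ((t1 - t2) * (lift th - th)) by ring.
  rewrite Rabs_mult. pose proof (lift_disp th). pose proof PI_4. pose proof (Rabs_pos (t1 - t2)).
  nra.
Qed.

Lemma phi_t_bilipschitz t : 0 <= t <= 1 -> bilipschitz (48 * L + 9) (phi_t lift t).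
Proof.
  intros Ht. apply bilipschitz_of_increasing. intros a b Hab. unfold phi_t.
  destruct (lift_bilipschitz_ordered a b Hab) as [[H0 H1] H2].
  set (M := 48 * L + 9) in *. set (y := lift a - lift b) in *.
  assert (HM : 1 <= M) by (unfold M; lra).
  replace ((1 - t) * a + t * lift a - ((1 - t) * b + t * lift b))
    with ((1 - t) * (a - b) + t * y) by (unfold y; ring).
  assert (0 <= (1 - t) * ((M - 1) * (a - b))) by (apply Rmult_le_pos; nra).
  assert (0 <= t * (M * (a - b) - y)) by (apply Rmult_le_pos; lra).
  assert (0 <= t * (M * y - (a - b))) by (apply Rmult_le_pos; lra).
  split; [split|]; nra.
Qed.

End Lift.

Section AngleFamily.

Variables (f : R -> R -> R) (M : R).
Hypothesis f_add_mult_2PI :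
  forall t th (k : Z), f t (th + IZR k * (2 * PI)) = f t th + IZR k * (2 * PI).
Hypothesis f_bilipschitz : forall t, 0 <= t <= 1 -> bilipschitz M (f t).
Hypothesis f_sub_time : forall t1 t2 th, Rabs (f t1 th - f t2 th) <= 2 * Rabs (t1 - t2).

Lemma f_sub_shift th1 th2 t1 t2 (k : Z) :
  f t1 (th1 + IZR k * (2 * PI)) - f t2 th2 = f t1 th1 - f t2 th2 + IZR k * (2 * PI).
Proof. rewrite f_add_mult_2PI. ring. Qed.

Lemma f_chord_le th1 th2 t1 t2 : 0 <= t1 <= 1 ->
  1 - cos (f t1 th1 - f t2 th2) <= 18 * M ^ 2 * (1 - cos (th1 - th2)) + 4 * (t1 - t2) ^ 2.
Proof.
  intros Ht1. destruct (exists_mult_2PI_Rabs_le_PI (th1 - th2)) as [k Hk].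
  rewrite <- (cos_add_mult_2PI (th1 - th2) k), <- (cos_add_mult_2PI (f t1 th1 - f t2 th2) k),
    <- f_sub_shift.
  set (th1' := th1 + IZR k * (2 * PI)).
  replace (th1 - th2 + IZR k * (2 * PI)) with (th1' - th2) in * by (unfold th1'; ring).
  replace 4 with (2 ^ 2) by ring. apply one_sub_cos_le_of_Rabs_le; [exact Hk|].
  replace (f t1 th1' - f t2 th2) with ((f t1 th1' - f t1 th2) + (f t1 th2 - f t2 th2)) by ring.
  pose proof (Rabs_triang (f t1 th1' - f t1 th2) (f t1 th2 - f t2 th2)).
  pose proof (proj1 (f_bilipschitz t1 Ht1 th1' th2)). pose proof (f_sub_time t1 t2 th2).
  lra.
Qed.

Lemma f_chord_ge th1 th2 t1 t2 : 0 <= t1 <= 1 ->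
  1 - cos (th1 - th2) <=
  18 * M ^ 2 * (1 - cos (f t1 th1 - f t2 th2)) + 4 * M ^ 2 * (t1 - t2) ^ 2.
Proof.
  intros Ht1. destruct (exists_mult_2PI_Rabs_le_PI (f t1 th1 - f t2 th2)) as [k Hk].
  rewrite <- (cos_add_mult_2PI (th1 - th2) k), <- (cos_add_mult_2PI (f t1 th1 - f t2 th2) k).
  rewrite <- f_sub_shift in *.
  set (th1' := th1 + IZR k * (2 * PI)) in *.
  replace (th1 - th2 + IZR k * (2 * PI)) with (th1' - th2) by (unfold th1'; ring).
  replace (4 * M ^ 2) with ((2 * M) ^ 2) by ring.
  apply one_sub_cos_le_of_Rabs_le with (s := t1 - t2); [exact Hk|].
  pose proof (proj2 (f_bilipschitz t1 Ht1 th1' th2)) as Hb.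
  replace (f t1 th1' - f t1 th2)
    with ((f t1 th1' - f t2 th2) + - (f t1 th2 - f t2 th2)) in Hb by ring.
  pose proof (Rabs_triang (f t1 th1' - f t2 th2) (- (f t1 th2 - f t2 th2))).
  rewrite Rabs_Ropp in *. pose proof (f_sub_time t1 t2 th2).
  pose proof (bilipschitz_nonneg _ _ (f_bilipschitz t1 Ht1)).
  nra.
Qed.

Lemma f_polar_bilipschitz : exists K, 0 < K /\
  forall r1 th1 t1 r2 th2 t2, 0 <= r1 <= 1 -> 0 <= t1 <= 1 -> 0 <= r2 <= 1 ->
    dist3 (polar_pt r1 th1 t1) (polar_pt r2 th2 t2)
      <= K * dist3 (polar_pt r1 (f t1 th1) t1) (polar_pt r2 (f t2 th2) t2) /\
    dist3 (polar_pt r1 (f t1 th1) t1) (polar_pt r2 (f t2 th2) t2)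
      <= K * dist3 (polar_pt r1 th1 t1) (polar_pt r2 th2 t2).
Proof.
  set (C := 22 * M ^ 2 + 4).
  assert (HC : 0 <= C) by (unfold C; pose proof (pow2_ge_0 M); lra).
  exists (sqrt (1 + 2 * C)). split; [apply sqrt_lt_R0; lra|].
  intros r1 th1 t1 r2 th2 t2 Hr1 Ht1 Hr2.
  pose proof (one_sub_cos_ge0 (th1 - th2)). pose proof (one_sub_cos_ge0 (f t1 th1 - f t2 th2)).
  pose proof (pow2_ge_0 M). pose proof (pow2_ge_0 (t1 - t2)).
  split; apply dist3_polar_le; try lra; unfold C.
  - pose proof (f_chord_ge th1 th2 t1 t2 Ht1). nra.
  - pose proof (f_chord_le th1 th2 t1 t2 Ht1). nra.
Qed.

End AngleFamily.

Theorem lemma4p3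
  (phi : R * R -> R * R) (lift : R -> R)
  (Hmaps : forall p, on_circle p -> on_circle (phi p))
  (Honto : forall q, on_circle q -> exists p, on_circle p /\ phi p = q)
  (Hbilip : exists L, 0 < L /\
     forall p q, on_circle p -> on_circle q ->
       dist2 p q <= L * dist2 (phi p) (phi q) /\
       dist2 (phi p) (phi q) <= L * dist2 p q)
  (H1 : phi (1, 0) = (1, 0)) (Hi : phi (0, 1) = (0, 1))
  (Hm1 : phi (-1, 0) = (-1, 0)) (Hmi : phi (0, -1) = (0, -1))
  (Hlift_incr : forall x y, x < y -> lift x < lift y)
  (Hlift_cont : continuity lift)
  (Hlift0 : lift 0 = 0)
  (Hlift : forall th, phi (expi th) = expi (lift th)) :
  exists K, 0 < K /\
    forall r1 th1 t1 r2 th2 t2,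
      0 <= r1 <= 1 -> 0 <= t1 <= 1 -> 0 <= r2 <= 1 -> 0 <= t2 <= 1 ->
      dist3 (polar_pt r1 th1 t1) (polar_pt r2 th2 t2)
        <= K * dist3 (phibar_pt lift r1 th1 t1) (phibar_pt lift r2 th2 t2) /\
      dist3 (phibar_pt lift r1 th1 t1) (phibar_pt lift r2 th2 t2)
        <= K * dist3 (polar_pt r1 th1 t1) (polar_pt r2 th2 t2).
Proof.
  destruct Hbilip as [L [HL Hb]].
  pose proof (chord_bilipschitz_of_circle phi lift L Hb Hlift) as Hchord.
  assert (Hfix : forall c, 0 < c < 2 * PI -> phi (expi c) = expi c -> lift c = c).
  { intros c Hc E. apply (lift_fixed_of_expi lift L); auto. now rewrite <- Hlift. }
  pose proof PI_RGT_0.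
  assert (Hdisp : forall th, Rabs (lift th - th) <= PI / 2).
  { apply (lift_displacement lift L); auto; apply Hfix; try lra; unfold expi.
    - now rewrite cos_PI2, sin_PI2.
    - now rewrite cos_PI, sin_PI.
    - now rewrite cos_3PI2, sin_3PI2. }
  destruct (f_polar_bilipschitz (phi_t lift) (48 * L + 9)) as [K [HK HKd]].
  - apply (phi_t_add_mult_2PI lift L); auto.
  - apply (phi_t_bilipschitz lift L); auto.
  - apply phi_t_sub_time; auto.
  - exists K. split; [exact HK|].
    intros r1 th1 t1 r2 th2 t2 Hr1 Ht1 Hr2 _. exact (HKd r1 th1 t1 r2 th2 t2 Hr1 Ht1 Hr2).
Qed.
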